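(* Let $R$ be the holistic system robustness random variable (defined in the context), with distribution $\pi_R$, so that $\mathbb{P}_{\pi_R}[-R\le a]=1$. Let $\alpha\in(0,1]$ and define \[ L(x,\mu,t)=t\left(\mu+\frac{1}{\alpha}\max\left\{\frac{x}{t}-\mu,0\right\}\right),\qquad u_b(\mu,t)=L(a,\mu,t). \] For $N$ independent samples $r_1,\dots,r_N$ of $R$, let $\zeta^*_N(\mu,t)=\max_{1\le k\le N}L(-r_k,\mu,t)$. Then for all $\epsilon\in[0,1]$, \[ \mathbb{P}^N_{\pi_R}\left[r^*_C\triangleq\inf_{\mu\in\mathbb{R},\ t>0}\zeta^*_N(\mu,t)(1-\epsilon)+u_b(\mu,t)\epsilon\ \ge\ \mathrm{CVaR}_\alpha(-R)\right]\ge 1-(1-\epsilon)^N. \]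
   Context: System setting: $\dot x = f(x,u)+\xi$, $x\in\mathcal{X}\subset\mathbb{R}^n$, $u=U(x,\theta)\in\mathcal{U}\subset\mathbb{R}^m$, $\theta\in\Theta\subset\mathbb{R}^p$ a parameter fixed along a trajectory, and $\xi$ stochastic noise with unknown distribution $\pi_\xi(x,u,t)$. $x^\theta$ denotes the resulting closed-loop state signal in $\mathcal{S}=\{s:\mathbb{R}_{\ge0}\to\mathbb{R}^n\}$ from an initial condition $x_0\in\mathcal{X}_0\subseteq\mathcal{X}$. A robustness metric is a function $\rho:\mathcal{S}\to[-a,b]$ with $a,b>0$ such that $\rho(s)\ge0$ only for signals exhibiting desired properties. The holistic system robustness $R$ is the scalar random variable whose samples are $r=\rho(x^\theta)$, where $(x_0,\theta)$ is sampled uniformly from $\mathcal{X}_0\times\Theta$ (and the trajectory is subject to the noise). Conditional-Value-at-Risk: $\mathrm{CVaR}_\alpha(Z)=\inf_{z\in\mathbb{R}} z+\frac{\mathbb{E}[\max(Z-z,0)]}{\alpha}$. $\zeta^*_N(\mu,t)$ is the solution of $\min_\zeta\zeta$ s.t. $\zeta\ge L(-r_i,\mu,t)$ for all $i$; $\mathbb{P}^N_{\pi_R}$ is the $N$-fold product measure of the i.i.d. sample. *)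

From HB Require Import structures.
From mathcomp Require Import all_boot all_order all_algebra.
From mathcomp Require Import all_classical all_reals all_analysis.
Set Implicit Arguments. Unset Strict Implicit. Unset Printing Implicit Defensive.
Import Order.TTheory GRing.Theory Num.Theory.
Local Open Scope classical_set_scope.
Local Open Scope ring_scope.

Definition Lfun {R : realType} (alpha x mu t : R) : R :=
  t * (mu + alpha^-1 * Num.max (x / t - mu) 0).

Definition ub {R : realType} (alpha a mu t : R) : R := Lfun alpha a mu t.

(* zeta*_N(mu,t) = max_{k} L(-r_k, mu, t) (as an extended real; N >= 1 in use) *)
Definition zetaN {R : realType} (N : nat) (alpha : R) (r : 'I_N -> R) (mu t : R)
  : \bar R :=
  (\big[maxe/-oo%E]_(k < N) (Lfun alpha (- r k) mu t)%:E)%E.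

Definition CVaR_neg {R : realType} (piR : probability R R) (alpha : R) : \bar R :=
  ereal_inf (range (fun z : R =>
    (z%:E + (\int[piR]_x (Num.max (- x - z) 0)%:E) * (alpha^-1)%:E)%E)).

Definition mutually_independent {d} {T : measurableType d} {R : realType}
  (P : probability T R) (N : nat) (X : 'I_N -> T -> R) : Prop :=
  forall (J : {set 'I_N}) (B : 'I_N -> set R),
    (forall i, measurable (B i)) ->
    P (\bigcap_(i in [set i | i \in J]) (X i @^-1` B i)) =
    (\prod_(i in J) P (X i @^-1` B i))%E.

Definition rC {R : realType} (N : nat) (alpha a eps : R) (r : 'I_N -> R) : \bar R :=
  ereal_inf [set (zetaN alpha r mu t * (1 - eps)%:E + (ub alpha a mu t * eps)%:E)%E
            | mu in [set: R] & t in [set t : R | 0 < t]].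

(* Let m be the smallest of the samples r_1, ..., r_N.  Since L(x, mu, t) is
   nondecreasing in x, zeta*_N(mu, t) = L(-m, mu, t), so r*_C depends on the
   samples only through m and is nonincreasing in m.  If the left tail
   pi_R(]-oo, m[) is at most eps, evaluating the CVaR infimum at z = t mu and
   splitting E[max(-R - z, 0)] over {R < m} and its complement bounds
   CVaR_alpha(-R) by L(-m, mu, t) (1 - eps) + u_b(mu, t) eps for every mu and
   t > 0, hence by r*_C.  So the bound can only fail when every sample lies in
   U = {s | pi_R(]-oo, s[) > eps}, an up-set of pi_R-mass at most 1 - eps; by
   independence this happens with probability at most (1 - eps)^N. *)

From HB Require Import structures.
From mathcomp Require Import all_boot all_order all_algebra.
From mathcomp Require Import all_classical all_reals all_analysis.
From mathcomp Require Import measurable_realfun ring lra.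
(* Imported last: mathcomp-analysis also defines an [Lfun]. *)
Import Order.TTheory GRing.Theory Num.Theory.
Local Open Scope classical_set_scope.
Local Open Scope ring_scope.

Section empirical_bound.
Context {R : realType}.
Implicit Types (alpha x y mu t : R).

Lemma LfunE alpha x mu t : 0 < t ->
  Lfun alpha x mu t = t * mu + alpha^-1 * Num.max (x - t * mu) 0.
Proof.
move=> t_gt0; rewrite /Lfun mulrDr mulrCA maxr_pMr ?ltW // mulr0 mulrBr.
by rewrite mulrCA mulfV ?gt_eqF // mulr1.
Qed.

Lemma ler_Lfun alpha x y mu t : 0 <= alpha -> 0 < t -> x <= y ->
  Lfun alpha x mu t <= Lfun alpha y mu t.
Proof.
move=> alpha_ge0 t_gt0 xy; rewrite !LfunE // lerD2l ler_wpM2l ?invr_ge0 //.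
by rewrite le_max2 // lerD2r.
Qed.

Context {N : nat} {alpha : R}.
Hypothesis alpha_ge0 : 0 <= alpha.
Implicit Types (r : 'I_N -> R).

Lemma Lfun_le_zetaN r k mu t :
  ((Lfun alpha (- r k) mu t)%:E <= zetaN alpha r mu t)%E.
Proof. by rewrite /zetaN (bigD1 k) //= le_max lexx. Qed.

Lemma zetaN_argmin r k mu t : 0 < t -> (forall j, r k <= r j) ->
  zetaN alpha r mu t = (Lfun alpha (- r k) mu t)%:E.
Proof.
move=> t_gt0 r_min; apply/le_anti; rewrite Lfun_le_zetaN andbT.
apply: (big_ind (fun z => z <= _)%E) => [|u v|j _]; first exact: leNye.
  by rewrite ge_max => -> ->.
by rewrite lee_fin ler_Lfun // lerN2.
Qed.

Lemma le_zetaN r r' mu t : 0 < t -> (forall k, r k <= r' k) ->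
  (zetaN alpha r' mu t <= zetaN alpha r mu t)%E.
Proof.
move=> t_gt0 rr'; apply: (big_ind2 (fun u v => u <= v)%E) => // [u u' v v'|k _].
  exact: le_max2.
by rewrite lee_fin ler_Lfun // lerN2.
Qed.

Context {a eps : R}.
Hypothesis eps_le1 : eps <= 1.

Lemma le_rC r r' : (forall k, r k <= r' k) ->
  (rC alpha a eps r' <= rC alpha a eps r)%E.
Proof.
move=> rr'; apply: le_ereal_inf_tmp => _ [mu _ [t t_gt0 <-]].
apply: ge_ereal_inf.
exists (zetaN alpha r' mu t * (1 - eps)%:E + (ub alpha a mu t * eps)%:E)%E.
  by exists mu => //; exists t.
by rewrite leeD2r // lee_wpmul2r ?lee_fin ?subr_ge0 // le_zetaN.
Qed.

Lemma rC_argmin r k : (forall j, r k <= r j) ->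
  rC alpha a eps r = rC alpha a eps (fun _ : 'I_N => r k).
Proof.
move=> r_min; apply/le_anti/andP; split; first exact: le_rC.
apply: le_ereal_inf_tmp => _ [mu _ [t t_gt0 <-]].
apply: ereal_inf_lbound; exists mu => //; exists t => //.
rewrite (zetaN_argmin _ _ _ _ t_gt0 r_min).
by rewrite (zetaN_argmin (fun=> r k) k _ _ t_gt0 (fun=> lexx _)).
Qed.

End empirical_bound.

Lemma integral_le_two_level {R : realType} {d} {T : measurableType d}
    {mu : probability T R} {A S : set T} (f : T -> R) {b c : R} :
  measurable A -> mu A = 1%E -> measurable S ->
  measurable_fun setT f -> (forall x, 0 <= f x) -> 0 <= c <= b ->
  (forall x, A x -> f x <= c + (b - c) * \1_S x) ->
  (\int[mu]_x (f x)%:E <= c%:E + (b - c)%:E * mu S)%E.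
Proof.
move=> mA muA mS mf f_ge0 /andP[c_ge0 cb] f_le.
have bc_ge0 : 0 <= b - c by rewrite subr_ge0.
apply: (@le_trans _ _ (\int[mu]_x ((c + (b - c) * \1_S x)%:E))%E).
  apply: ae_ge0_le_integral => //.
  - by move=> x _; rewrite lee_fin.
  - exact/measurable_EFinP.
  - by move=> x _; rewrite lee_fin addr_ge0 ?mulr_ge0.
  - apply/measurable_EFinP; apply: measurable_funD => //.
    exact/measurable_funM/measurable_indic.
  exists (~` A); split; first exact: measurableC.
    by have := probability_setC mu mA; rewrite muA subee.
  by move=> x /= nle Ax; apply: nle => _; rewrite lee_fin f_le.
under eq_integral do rewrite EFinD EFinM.
rewrite ge0_integralD //; last 2 first.
- by move=> x _; rewrite lee_fin mulr_ge0.
- exact/measurable_EFinP/measurable_funM/measurable_indic.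
rewrite ge0_integralZl //; last exact/measurable_EFinP/measurable_indic.
rewrite integral_indic // setIT integral_cst //.
set muT := (X in (c%:E * X)%E); have -> : muT = 1%E by exact: probability_setT.
by rewrite mule1.
Qed.

Lemma CVaR_neg_le_mix {R : realType} {piR : probability R R} {alpha a eps m t : R}
    (mu : R) :
  0 < alpha -> eps <= 1 -> piR [set x | - x <= a] = 1%E ->
  (piR `]-oo, m[%classic <= eps%:E)%E -> 0 < t ->
  (CVaR_neg piR alpha <=
     (Lfun alpha (- m) mu t * (1 - eps) + ub alpha a mu t * eps)%:E)%E.
Proof.
move=> alpha_gt0 eps_le1 a_bound m_tail t_gt0.
set z := t * mu; set A := Num.max (- m - z) 0; set B := Num.max (a - z) 0.
set C := Num.min A B; set S := `]-oo, m[%classic.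
have mS : measurable S by exact: measurable_itv.
have ma : measurable [set x : R | - x <= a].
  rewrite (_ : [set x | - x <= a] = `[- a, +oo[%classic); first exact: measurable_itv.
  by apply/seteqP; split => x /=; rewrite in_itv /= andbT lerNl.
pose p := fine (piR S).
have pE : piR S = p%:E by rewrite fineK ?fin_num_measure.
have p_ge0 : 0 <= p by rewrite -lee_fin -pE.
have p_le : p <= eps by rewrite -lee_fin -pE.
have CB : C <= B by rewrite ge_min lexx orbT.
have CA : C <= A by rewrite ge_min lexx.
have C_ge0 : 0 <= C by rewrite le_min !le_max lexx !orbT.
(* Off S the hinge is bounded both by A (as -x <= -m) and, almost surely, by
   B (as -x <= a); taking the smaller bound keeps the weight B - C of S
   nonnegative. *)
have hinge_le : (\int[piR]_x (Num.max (- x - z) 0)%:E <= (C + (B - C) * p)%:E)%E.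
  rewrite EFinD EFinM -pE.
  apply: (integral_le_two_level (mu := piR) (S := S) (fun x => Num.max (- x - z) 0) ma)
    => //.
  - by apply: measurable_maxr => //; apply: measurable_funB => //; exact: measurable_funN.
  - by move=> x; rewrite le_max lexx orbT.
  - by rewrite C_ge0.
  move=> x /= xa; rewrite indicE; have [xS|xS] := boolP (x \in S).
    by rewrite mulr1 addrCA subrr addr0; apply: le_max2; rewrite // lerD2r.
  have mx : - x <= - m.
    by move: xS; rewrite notin_setE /S /= in_itv /= => /negP; rewrite -leNgt lerN2.
  by rewrite mulr0 addr0 le_min !le_max2 ?lerD2r.
apply: (@le_trans _ _ (z%:E + (\int[piR]_x (Num.max (- x - z) 0)%:E) * (alpha^-1)%:E)%E).
  by apply: ereal_inf_lbound; exists z.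
apply: (@le_trans _ _ ((z + (C + (B - C) * p) * alpha^-1)%:E)).
  by rewrite EFinD leeD2l // EFinM lee_wpmul2r // lee_fin invr_ge0 ltW.
rewrite /ub !LfunE // -/z -/A -/B lee_fin.
have -> : (z + alpha^-1 * A) * (1 - eps) + (z + alpha^-1 * B) * eps =
          z + (A * (1 - eps) + B * eps) * alpha^-1 by ring.
rewrite lerD2l; apply: ler_wpM2r; first by rewrite invr_ge0 ltW.
have : (B - C) * p <= (B - C) * eps by rewrite ler_wpM2l // subr_ge0.
have : C * (1 - eps) <= A * (1 - eps) by rewrite ler_wpM2r // subr_ge0.
lra.
Qed.

Section monotone_sets.
Context {R : realType}.
Implicit Types U : set R.

Lemma upset_measurable U : (forall x y, x <= y -> U x -> U y) -> measurable U.
Proof.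
move=> Uup; apply: is_interval_measurable => x y Ux _ z /andP[xz _].
exact: Uup xz Ux.
Qed.

Lemma downset_measurable U : (forall x y, x <= y -> U y -> U x) -> measurable U.
Proof.
move=> Udown; apply: is_interval_measurable => x y _ Uy z /andP[_ zy].
exact: Udown zy Uy.
Qed.

Lemma upset_gt_inf {U u} : (forall x y, x <= y -> U x -> U y) -> U u ->
  has_lbound U -> forall x, inf U < x -> U x.
Proof.
move=> Uup Uu Ulb x Ux; have [v Uv vx] : exists2 v, U v & v < x.
  have := @inf_adherent _ U (x - inf U); rewrite subr_gt0 addrCA subrr addr0.
  by case=> // [|v ? ?]; [exact: (conj (ex_intro _ u Uu) Ulb) | exists v].
exact: Uup (ltW vx) Uv.
Qed.

Lemma upset_unbounded {U} : (forall x y, x <= y -> U x -> U y) ->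
  ~ has_lbound U -> forall x, U x.
Proof.
move=> Uup Unlb x; apply: contrapT => nUx; apply: Unlb; exists x => y Uy.
by rewrite leNgt; apply/negP => yx; exact: nUx (Uup _ _ (ltW yx) Uy).
Qed.

End monotone_sets.

Section left_tail.
Context {R : realType} (piR : probability R R).

(* The identity, as a random variable on (R, piR), makes the library's cdf
   lemmas available for piR itself. *)
Let idR : R -> R := idfun.
#[local] HB.instance Definition _ :=
  @isMeasurableFun.Build _ _ _ _ idR (@measurable_id _ _ setT).
Let cdfE s : cdf (idR : {RV piR >-> R}) s = piR `]-oo, s]%classic.
Proof. by []. Qed.

Lemma le_left_tail x y : x <= y ->
  (piR `]-oo, x[%classic <= piR `]-oo, y[%classic)%E.
Proof.
move=> xy; apply: le_measure; rewrite ?inE; try exact: measurable_itv.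
by move=> z /=; rewrite !in_itv /= => /lt_le_trans; apply.
Qed.

Lemma probability_left_tail_gt (eps : R) : eps <= 1 ->
  (piR [set s | (eps%:E < piR `]-oo, s[%classic)%E] <= (1 - eps)%:E)%E.
Proof.
move=> eps_le1; set U := [set s | _].
have tail_le_cdf s : (piR `]-oo, s[%classic <= piR `]-oo, s]%classic)%E.
  apply: le_measure; rewrite ?inE; try exact: measurable_itv.
  by move=> z /=; rewrite !in_itv /= => /ltW.
have Uup x y : x <= y -> U x -> U y.
  by move=> xy /lt_le_trans; apply; exact: le_left_tail.
(* U is an up-set, so its complement W is empty, R, ]-oo, inf U[ or
   ]-oo, inf U]; in the last case eps <= piR W by right-continuity of the cdf. *)
suff [W [mW -> epsW]] : exists W, [/\ measurable W, U = ~` W & (eps%:E <= piR W)%E].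
  rewrite probability_setC // -[piR W]fineK ?fin_num_measure // in epsW *.
  by rewrite -EFinB lee_fin lerD2l lerN2 -lee_fin.
have [U0|/set0P[u Uu]] := eqVneq U set0.
  by exists setT; rewrite setCT U0 probability_setT lee_fin.
have [Ulb|Unlb] := pselect (has_lbound U); last first.
  have UT := upset_unbounded Uup Unlb.
  exists set0; split => //.
    by rewrite setC0; apply/seteqP; split => // x _; exact: UT.
  rewrite measure0; apply: (cvge_to_ge (cvg_cdfNy0 (idR : {RV piR >-> R}))).
  by apply: nearW => x; rewrite cdfE; apply: le_trans (tail_le_cdf x); exact/ltW/UT.
have U_ge x : U x -> inf U <= x by move=> Ux; exact: ge_inf.
have U_gt := upset_gt_inf Uup Uu Ulb.
have [Uinf|nUinf] := pselect (U (inf U)).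
  exists `]-oo, inf U[%classic; split; [exact: measurable_itv| |exact: ltW].
  apply/seteqP; split => x; rewrite /= in_itv /=.
    by move=> /U_ge; rewrite leNgt => /negP.
  by move=> /negP; rewrite -leNgt => /Uup; apply.
exists `]-oo, inf U]%classic; split; first exact: measurable_itv.
  apply/seteqP; split => x; rewrite /= in_itv /=.
    2: by move=> /negP; rewrite -ltNge => /U_gt.
  move=> Ux xq; apply: nUinf.
  by have -> : inf U = x by apply/le_anti; rewrite xq U_ge.
suff : (eps%:E <= cdf (idR : {RV piR >-> R}) (inf U))%E by [].
apply: (cvge_to_ge (@cdf_right_continuous _ _ _ _ (idR : {RV piR >-> R}) (inf U))).
near=> x; rewrite cdfE; apply: le_trans (tail_le_cdf x); apply/ltW/U_gt.
by near: x; exact: nbhs_right_gt.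
Unshelve. all: by end_near.
Qed.
End left_tail.

Lemma CVaR_neg_le_rC {R : realType} (piR : probability R R) (alpha a eps : R)
    N (r : 'I_N -> R) k :
  0 < alpha -> eps <= 1 -> piR [set x | - x <= a] = 1%E ->
  (piR `]-oo, r k[%classic <= eps%:E)%E ->
  (CVaR_neg piR alpha <= rC alpha a eps r)%E.
Proof.
move=> alpha_gt0 eps_le1 a_bound rk_tail.
apply: le_ereal_inf_tmp => _ [mu _ [t t_gt0 <-]].
apply: le_trans (CVaR_neg_le_mix mu alpha_gt0 eps_le1 a_bound rk_tail t_gt0) _.
rewrite EFinD EFinM leeD2r // lee_wpmul2r ?lee_fin ?subr_ge0 //.
exact: Lfun_le_zetaN.
Qed.

Lemma rC_event_measurable {R : realType} {d} {T : measurableType d}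
    {P : probability T R} {alpha a eps : R} (c : \bar R) {N}
    (X : 'I_N -> {RV P >-> R}) :
  0 <= alpha -> eps <= 1 -> (0 < N)%N ->
  measurable [set w | (c <= rC alpha a eps (fun k => X k w))%E].
Proof.
move=> alpha_ge0 eps_le1 N_gt0.
set V := [set s : R | (c <= rC alpha a eps (fun _ : 'I_N => s))%E].
have mV : measurable V.
  apply: downset_measurable => x y xy /le_trans; apply; exact: le_rC.
rewrite (_ : [set w | _] = \bigcup_(k in [set: 'I_N]) (X k @^-1` V)).
  apply: fin_bigcup_measurable; first exact: finite_finset.
  by move=> k _; exact: measurable_funPTI.
apply/seteqP; split => w /=;
  have [k1 _ k1_min] := @arg_minP _ R _ (Ordinal N_gt0) xpredT (fun k => X k w) isT;
  rewrite (rC_argmin alpha_ge0 eps_le1 _ _ (k1_min^~ isT)).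
  by move=> ?; exists k1.
move=> [k _ Vk]; apply: le_trans Vk _; apply: le_rC => // _; exact: k1_min.
Qed.

Lemma probability_bigcup_preimage_setC {R : realType} {d} {T : measurableType d}
    {P : probability T R} {N} {X : 'I_N -> {RV P >-> R}} {B : set R} {p : R} :
  mutually_independent P (fun k => (X k : T -> R)) -> measurable B ->
  (forall k, P (X k @^-1` B) = p%:E) ->
  P (\bigcup_(k in [set: 'I_N]) (X k @^-1` ~` B)) = (1 - p ^+ N)%:E.
Proof.
move=> indep mB lawB.
set D := \bigcap_(k in [set k | k \in [set: 'I_N]%SET]) (X k @^-1` B).
have mD : measurable D.
  apply: fin_bigcap_measurable; first exact: finite_finset.
  by move=> k _; exact: measurable_funPTI.
rewrite (_ : \bigcup_(k in _) _ = ~` D); last first.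
  apply/seteqP; split => w /=.
    by move=> [k _ nBk] /(_ k); rewrite /= inE => /(_ isT).
  by move=> /existsNP[k /not_implyP[_ nBk]]; exists k.
rewrite probability_setC // indep //=.
under eq_bigr do rewrite lawB.
by rewrite prodEFin prodr_const cardsT card_ord.
Qed.

Theorem corollary5 (R : realType) (piR : probability R R) (a alpha eps : R)
  (d : measure_display) (T : measurableType d) (P : probability T R)
  (N : nat) (X : 'I_N -> {RV P >-> R}) :
  0 < a ->
  piR [set x : R | - x <= a] = 1%E ->
  0 < alpha <= 1 ->
  0 <= eps <= 1 ->
  (0 < N)%N ->
  mutually_independent P (fun k => (X k : T -> R)) ->
  (forall k (B : set R), measurable B -> P (X k @^-1` B) = piR B) ->
  (P [set w | (CVaR_neg piR alpha <= rC alpha a eps (fun k => X k w))%E]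
     >= (1 - (1 - eps) ^+ N)%:E)%E.
Proof.
move=> _ a_bound /andP[alpha_gt0 _] /andP[_ eps_le1] N_gt0 indep lawX.
set U := [set s : R | (eps%:E < piR `]-oo, s[%classic)%E].
have mU : measurable U.
  by apply: upset_measurable => x y xy /lt_le_trans; apply; exact: le_left_tail.
have lawU k : P (X k @^-1` U) = (fine (piR U))%:E.
  by rewrite lawX // fineK ?fin_num_measure.
set some_outside := \bigcup_(k in [set: 'I_N]) (X k @^-1` ~` U).
have m_some_outside : measurable some_outside.
  apply: fin_bigcup_measurable; first exact: finite_finset.
  by move=> k _; exact/measurable_funPTI/measurableC.
apply: (@le_trans _ _ (P some_outside)).
  rewrite (probability_bigcup_preimage_setC indep mU lawU) lee_fin lerD2l lerN2.
  apply: lerXn2r; rewrite ?nnegrE ?fine_ge0 ?subr_ge0 //.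
  by rewrite -lee_fin fineK ?fin_num_measure // probability_left_tail_gt.
apply: le_measure; rewrite ?inE //.
  exact: rC_event_measurable _ _ (ltW alpha_gt0) eps_le1 N_gt0.
move=> w [k _ /= /negP]; rewrite -leNgt => Xk_tail.
exact: CVaR_neg_le_rC alpha_gt0 eps_le1 a_bound Xk_tail.
Qed.
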